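(* Let $m,k,n$ be natural numbers with $n\ge k+1$, and let $V_0,\ldots,V_{m-1}$ be $G$-representations over $K$. Then a tensor $\omega\in V_{[m]}$ has rank (respectively, border rank) at most $k$ if and only if for all $m$-tuples of $G$-linear maps $\phi_i:V_i\to K[G]^n$ ($i\in[m]$) the tensor $\phi_{[m]}(\omega)$ has rank (respectively, border rank) at most $k$. Moreover, if $\omega\in V_{[m]}$ has border rank at most $k$, then there exist $m$-tuples of $G$-linear maps $\phi_i:V_i\to K[G]^k$ and $\psi_i:K[G]^k\to V_i$ such that $\psi_{[m]}(\phi_{[m]}(\omega))=\omega$.
   Context: $G$ is a finite Abelian group; $K$ is an infinite field such that every finite-dimensional $G$-representation over $K$ is a direct sum of one-dimensional irreducible representations; $G$-representations are finite-dimensional. $K[G]$ denotes the regular representation of $G$. $[m]=\{0,\ldots,m-1\}$ and $V_{[m]}=\bigotimes_{i\in[m]}V_i$. For linear maps $\phi_i:V_i\to U_i$, $\phi_{[m]}=\bigotimes_i\phi_i:V_{[m]}\to U_{[m]}$ sends $\bigotimes_i v_i\mapsto\bigotimes_i\phi_i(v_i)$. The rank of a tensor is the minimal number of pure tensors summing to it; border rank at most $k$ means lying in the Zariski closure of the set of tensors of rank at most $k$. *)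

From HB Require Import structures.
From mathcomp Require Import all_boot all_order all_algebra all_fingroup.
From mathcomp Require Import mxrepresentation character.
From mathcomp Require Import mpoly.
Set Implicit Arguments. Unset Strict Implicit. Unset Printing Implicit Defensive.
Import GRing.Theory.
Local Open Scope ring_scope.

Section Defs.
Variable K : fieldType.

Definition infinite_field : Prop := forall s : seq K, exists x : K, x \notin s.

Variables (gT : finGroupType) (G : {group gT}).

Definition reps_split_into_lines : Prop :=
  forall (d : nat) (rG : mx_representation K G d),
    exists (I : finType) (U : I -> 'M[K]_d),
      (forall i, mxsimple rG (U i) /\ \rank (U i) = 1%N) /\
      (\sum_i U i == 1%:M)%MS /\ mxdirect (\sum_i U i).

Definition regRep : representation K G := Representation (regular_repr K G).
Definition regRepPow (n : nat) : representation K G := muln_grepr regRep n.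

(* G-linear maps f : K^a -> K^b (row-vector convention v |-> v *m f). *)
Definition Glinear (rV rW : representation K G)
    (f : 'M[K]_(rdegree rV, rdegree rW)) : Prop :=
  forall x, x \in G -> rV x *m f = f *m rW x.
End Defs.

Section Tensors.
Variable K : fieldType.
Variable m : nat.

(* Multi-indices for V_[m] = V_0 (x) ... (x) V_{m-1}, dim V_i = d i. *)
Definition tidx (d : 'I_m -> nat) := {dffun forall i : 'I_m, 'I_(d i)}.

(* Tensors in V_[m], given by their coordinates in the product basis. *)
Definition tensor (d : 'I_m -> nat) := {ffun tidx d -> K}.

Definition pure_tensor (d : 'I_m -> nat) (v : forall i, 'rV[K]_(d i)) : tensor d :=
  [ffun j : tidx d => \prod_(i < m) v i 0 (j i)].

(* phi_[m] = (x)_i phi_i applied to a tensor (phi_i : v |-> v *m phi i). *)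
Definition tensor_map (d e : 'I_m -> nat) (phi : forall i, 'M[K]_(d i, e i))
    (w : tensor d) : tensor e :=
  [ffun j : tidx e => \sum_(a : tidx d) w a * \prod_(i < m) phi i (a i) (j i)].

Definition rank_le (d : 'I_m -> nat) (k : nat) (w : tensor d) : Prop :=
  exists u : 'I_k -> forall i, 'rV[K]_(d i),
    w = \sum_(l < k) pure_tensor (u l).

Definition tcoords (d : 'I_m -> nat) (w : tensor d) : 'I_#|{: tidx d}| -> K :=
  fun j => w (enum_val j).

(* border rank at most k: w lies in the Zariski closure of the set of tensors
   of rank at most k, i.e. every polynomial function vanishing on that set
   vanishes at w. *)
Definition border_rank_le (d : 'I_m -> nat) (k : nat) (w : tensor d) : Prop :=
  forall p : {mpoly K[#|{: tidx d}|]},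
    (forall t : tensor d, rank_le k t -> p.@[tcoords t] = 0) ->
    p.@[tcoords w] = 0.
End Tensors.

From HB Require Import structures.
From mathcomp Require Import all_boot all_order all_algebra all_fingroup.
From mathcomp Require Import mxrepresentation character.
From mathcomp Require Import mpoly.
Set Implicit Arguments. Unset Strict Implicit. Unset Printing Implicit Defensive.
Import GRing.Theory.
Local Open Scope ring_scope.

(* Fix, by [Ksplit], eigenbases of every [V_i] and of [K[G]^n]: in these bases a
   G-linear map is a matrix that only connects basis vectors carrying the same
   linear character of G, and every linear character occurs n times in K[G]^n.

   Rank and border rank at most k both force every flattening of w to have
   rank at most k (for border rank because (k+1)-minors are polynomials in the
   coordinates).  Conversely, when all flattenings of w have rank at most k, the
   row space of each flattening, cut down to the coordinates of one character,
   has dimension at most k; it embeds into the k copies of that character in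
   K[G]^k and can be projected back: this gives G-linear phi_i, psi_i with
   psi(phi(w)) = w, so w inherits (border) rank at most k from phi(w).  Finally, a non-zero
   (k+1)-minor of a flattening involves at most k+1 basis vectors of each
   factor; sending them injectively to basis vectors of K[G]^n with the same
   character (n >= k+1) yields a G-linear image of w with the same minor, hence
   of border rank larger than k. *)

Section TensorMaps.
Variables (K : fieldType) (m : nat).
Implicit Types d e : 'I_m -> nat.

Lemma bigA_distr_tidx d (F : forall i : 'I_m, 'I_(d i) -> K) :
  \prod_(i < m) \sum_(x : 'I_(d i)) F i x =
  \sum_(a : tidx d) \prod_(i < m) F i (a i).
Proof.
pose T_ := fun i : 'I_m => 'I_(d i).
pose P_ := fun i : 'I_m => [ffun x : T_ i => F i x].
rewrite (reindex (@dffun_of_fprod _ T_)); last exact/onW_bij/dffun_of_fprod_bij.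
transitivity (\sum_(t : fprod T_) \prod_(i in 'I_m) P_ i (t i)); last first.
  by apply: eq_bigr => t _; apply: eq_bigr => i _; rewrite ffunE /dffun_of_fprod ffunE.
rewrite (@big_fprod K 0 1 *%R +%R _ T_ P_).
rewrite -(bigA_distr_big_dep _ (fun i j => untag 0 (P_ i) j)).
apply: eq_bigr => i _; rewrite -(big_tag (op := +%R) P_ i).
by apply: eq_bigr => x _; rewrite ffunE.
Qed.

Lemma eq_tensor_map d e (phi psi : forall i, 'M[K]_(d i, e i)) w :
  (forall i, phi i = psi i) -> tensor_map phi w = tensor_map psi w.
Proof.
move=> eq_phi; apply/ffunP => j; rewrite !ffunE; apply: eq_bigr => a _.
by under eq_bigr => i _ do rewrite eq_phi.
Qed.

Lemma tensor_map_pure d e (phi : forall i, 'M[K]_(d i, e i)) v :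
  tensor_map phi (pure_tensor v) = pure_tensor (fun i => v i *m phi i).
Proof.
apply/ffunP => j; rewrite !ffunE.
under eq_bigr => a _ do rewrite ffunE -big_split /=.
rewrite -(bigA_distr_tidx (fun i x => v i 0 x * phi i x (j i))).
by apply: eq_bigr => i _; rewrite mxE.
Qed.

Lemma tensor_map_sum d e (phi : forall i, 'M[K]_(d i, e i)) k (u : 'I_k -> tensor K d) :
  tensor_map phi (\sum_(l < k) u l) = \sum_(l < k) tensor_map phi (u l).
Proof.
apply/ffunP => j; rewrite ffunE sum_ffunE.
under eq_bigr => a _ do rewrite sum_ffunE mulr_suml.
by rewrite exchange_big; apply: eq_bigr => l _; rewrite ffunE.
Qed.

Lemma rank_le_tensor_map d e (phi : forall i, 'M[K]_(d i, e i)) k w :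
  rank_le k w -> rank_le k (tensor_map phi w).
Proof.
case=> u ->; exists (fun l i => u l i *m phi i).
by rewrite tensor_map_sum; apply: eq_bigr => l _; apply: tensor_map_pure.
Qed.

Lemma tensor_map_comp d e f (psi : forall i, 'M[K]_(d i, e i))
    (phi : forall i, 'M[K]_(e i, f i)) w :
  tensor_map phi (tensor_map psi w) = tensor_map (fun i => psi i *m phi i) w.
Proof.
apply/ffunP => j; rewrite !ffunE.
transitivity (\sum_(b : tidx e) \sum_(a : tidx d)
   w a * (\prod_i psi i (a i) (b i)) * \prod_i phi i (b i) (j i)).
  by apply: eq_bigr => b _; rewrite ffunE mulr_suml.
rewrite exchange_big; apply: eq_bigr => a _.
rewrite (eq_bigr (fun i => \sum_y psi i (a i) y * phi i y (j i))); last first.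
  by move=> i _; rewrite mxE.
by rewrite bigA_distr_tidx mulr_sumr; apply: eq_bigr => b _; rewrite big_split mulrA.
Qed.

Lemma prod_nat_eq_tidx d (a j : tidx d) :
  \prod_i ((a i == j i)%:R : K) = (a == j)%:R.
Proof.
have [->|neq_aj] := eqVneq a j; first by apply: big1 => i _; rewrite eqxx.
have [i neq_i] : exists i, a i != j i.
  apply/existsP; apply: contraR neq_aj => /existsPn eq_aj.
  by apply/eqP/ffunP => i; apply/eqP; rewrite -[_ == _]negbK eq_aj.
by rewrite (bigD1 i) //= (negbTE neq_i) mul0r.
Qed.

Lemma tensor_map_delta d e (phi : forall i, 'M[K]_(d i, e i)) w (b : tidx e) (a : tidx d) :
  (forall i x, phi i x (b i) = (x == a i)%:R) -> tensor_map phi w b = w a.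
Proof.
move=> phi_b; rewrite ffunE.
under eq_bigr => a' _ do rewrite (eq_bigr _ (fun i _ => phi_b i (a' i))) prod_nat_eq_tidx.
rewrite (bigD1 a) //= eqxx mulr1 big1 ?addr0 // => a' /negbTE->.
by rewrite mulr0.
Qed.

Lemma tensor_map1 d w : tensor_map (fun i => 1%:M : 'M[K]_(d i)) w = w.
Proof. by apply/ffunP => j; apply: tensor_map_delta => i x; rewrite mxE. Qed.

End TensorMaps.

Section Flattenings.
Variables (K : fieldType) (m : nat).
Implicit Types d e : 'I_m -> nat.

Definition tidx_upd d (a : tidx d) i (x : 'I_(d i)) : tidx d :=
  [ffun l => dfwith (fun l => a l) x l].
Arguments tidx_upd {d} a i x.

Lemma tidx_upd_at d (a : tidx d) i x : tidx_upd a i x i = x.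
Proof. by rewrite ffunE dfwith_in. Qed.

Lemma tidx_upd_out d (a : tidx d) i x l : l != i -> tidx_upd a i x l = a l.
Proof. by move=> neq_li; rewrite ffunE dfwith_out // eq_sym. Qed.

Lemma tidx_updK d (a : tidx d) i : tidx_upd a i (a i) = a.
Proof.
apply/ffunP => l; have [->|neq_li] := eqVneq l i; first by rewrite tidx_upd_at.
by rewrite tidx_upd_out.
Qed.

(* Row [p] is the [i]-fibre of [w] through the multi-index [enum_val p], whose
   [i]-th entry is ignored; hence rows repeat. *)
Definition flattening d (w : tensor K d) i : 'M[K]_(#|{: tidx d}|, d i) :=
  \matrix_(p, x) w (tidx_upd (enum_val p) i x).

Definition flat_rank_le d k (w : tensor K d) := forall i, (\rank (flattening w i) <= k)%N.

Definition id_except d i (P : 'M[K]_(d i)) : forall l, 'M[K]_(d l) :=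
  @dfwith _ (fun l => 'M[K]_(d l)) (fun l => 1%:M) i P.
Arguments id_except {d} i P.

Lemma prod_id_except d i (P : 'M[K]_(d i)) (a j : tidx d) :
  \prod_l id_except i P l (a l) (j l) = (a == tidx_upd j i (a i))%:R * P (a i) (j i).
Proof.
rewrite (bigD1 i) //= {1}/id_except dfwith_in mulrC; congr (_ * _).
rewrite -prod_nat_eq_tidx [RHS](bigD1 i) //= tidx_upd_at eqxx mul1r.
apply: eq_bigr => l neq_li; rewrite /id_except dfwith_out 1?eq_sym //.
by rewrite mxE tidx_upd_out // eq_sym.
Qed.

Lemma tensor_map_id_except d i (P : 'M[K]_(d i)) (w : tensor K d) :
  flattening w i *m P = flattening w i -> tensor_map (id_except i P) w = w.
Proof.
move=> /matrixP fixP; apply/ffunP => j; rewrite ffunE.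
have := fixP (enum_rank j) (j i); rewrite !mxE enum_rankK tidx_updK => <-.
transitivity (\sum_(a : tidx d) \sum_(x : 'I_(d i))
    (a == tidx_upd j i x)%:R * (w a * P x (j i))).
  apply: eq_bigr => a _; rewrite prod_id_except mulrCA (bigD1 (a i)) //=.
  rewrite big1 ?addr0 // => x neq_x; have [eq_a|] := eqVneq a (tidx_upd j i x).
    by move: neq_x; rewrite {1}eq_a tidx_upd_at eqxx.
  by rewrite mul0r.
rewrite exchange_big; apply: eq_bigr => x _; rewrite !mxE enum_rankK.
rewrite (bigD1 (tidx_upd j i x)) //= eqxx mul1r big1 ?addr0 //.
by move=> a /negbTE->; rewrite mul0r.
Qed.

Lemma tensor_map_id_on_flattenings d (P : forall i, 'M[K]_(d i)) (w : tensor K d) :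
  (forall i, flattening w i *m P i = flattening w i) -> tensor_map P w = w.
Proof.
move=> fixP; pose P_ t l : 'M[K]_(d l) := if (l < t)%N then P l else 1%:M.
suff /(_ m (leqnn m)) : forall t, (t <= m)%N -> tensor_map (P_ t) w = w.
  by move=> fixPm; rewrite -[RHS]fixPm; apply: eq_tensor_map => l; rewrite /P_ ltn_ord.
elim=> [_|t IHt lt_tm].
  by rewrite -[RHS]tensor_map1; apply: eq_tensor_map => l; rewrite /P_ ltn0.
pose i : 'I_m := Ordinal lt_tm.
rewrite -[RHS](tensor_map_id_except (fixP i)) -[in RHS](IHt (ltnW lt_tm)).
rewrite tensor_map_comp; apply: eq_tensor_map => l; rewrite /P_ /id_except ltnS.
have [<-|neq_il] := eqVneq i l; first by rewrite dfwith_in ltnn leqnn mul1mx.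
rewrite dfwith_out // mulmx1 leq_eqVlt; suff /negbTE-> : val l != t by [].
by apply: contra neq_il => /eqP eq_lt; apply/eqP/val_inj.
Qed.

End Flattenings.
Arguments tidx_upd {m d} a i x.
Arguments id_except {K m d} i P.

Section Minors.
Variable K : fieldType.

Lemma mxrank_mxsub m n m' n' (f : 'I_m' -> 'I_m) (g : 'I_n' -> 'I_n) (A : 'M[K]_(m, n)) :
  (\rank (mxsub f g A) <= \rank A)%N.
Proof.
rewrite -[A]mulmx1 mxsub_mul; apply: leq_trans (mxrankM_maxl _ _) _.
by rewrite mulmx1; apply/mxrankS/rowsub_sub.
Qed.

Lemma det_mxsub_eq0 m n k (f : 'I_k.+1 -> 'I_m) (g : 'I_k.+1 -> 'I_n) (A : 'M[K]_(m, n)) :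
  (\rank A <= k)%N -> \det (mxsub f g A) = 0.
Proof.
apply: contraTeq => det_neq0; rewrite -ltnNge; apply: leq_trans (mxrank_mxsub f g A).
by rewrite mxrank_unit // unitmxE unitfE.
Qed.

Lemma mxrank_gt_minor m n k (A : 'M[K]_(m, n)) : (k < \rank A)%N ->
  exists (f : 'I_k.+1 -> 'I_m) (g : 'I_k.+1 -> 'I_n), \det (mxsub f g A) != 0.
Proof.
move=> lt_kA; pose f := maxrankfun A; pose h : 'I_k.+1 -> 'I_(\rank A) := widen_ord lt_kA.
pose B := rowsub h (rowsub f A).
have rkB : \rank B = k.+1.
  rewrite /B rowsubE mxrankMfree ?maxrowsub_free //.
  apply/eqP; rewrite eqn_leq rank_leq_row -{1}(mxrank1 K k.+1).
  have -> : 1%:M = rowsub h 1%:M *m (rowsub h 1%:M)^T :> 'M[K]_k.+1.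
    apply/matrixP => s s'; rewrite !mxE (bigD1 (h s)) //= !mxE eqxx mul1r big1 ?addr0.
      by rewrite -val_eqE /= eq_sym val_eqE.
    by move=> j neq_j; rewrite !mxE eq_sym (negbTE neq_j) mul0r.
  exact: mxrankM_maxl.
have fullBT : row_full B^T by rewrite /row_full mxrank_tr rkB.
exists (f \o h), (fullrankfun fullBT).
rewrite -det_tr -unitfE -unitmxE; suff -> : (mxsub (f \o h) (fullrankfun fullBT) A)^T =
  rowsub (fullrankfun fullBT) B^T by apply: fullrowsub_unit.
by apply/matrixP => r s; rewrite !mxE.
Qed.

End Minors.

Section FlatteningRank.
Variables (K : fieldType) (m : nat).
Implicit Types d e : 'I_m -> nat.

Lemma flat_rank_le_rank d k (w : tensor K d) : rank_le k w -> flat_rank_le k w.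
Proof.
case=> u -> i; pose B : 'M[K]_(k, d i) := \matrix_(l, x) u l i 0 x.
pose A : 'M[K]_(#|{: tidx d}|, k) :=
  \matrix_(p, l) \prod_(j | j != i) u l j 0 ((enum_val p : tidx d) j).
suff -> : flattening (\sum_(l < k) pure_tensor (u l)) i = A *m B.
  by apply: leq_trans (mxrankM_maxr _ _) _; apply: rank_leq_row.
apply/matrixP => p x; rewrite !mxE sum_ffunE; apply: eq_bigr => l _.
rewrite !mxE ffunE (bigD1 i) //= tidx_upd_at mulrC; congr (_ * _).
by apply: eq_bigr => j neq_ji; rewrite tidx_upd_out.
Qed.

Lemma rank_le_border d k (w : tensor K d) : rank_le k w -> border_rank_le k w.
Proof. by move=> rw p; apply. Qed.

Lemma tcoords_enum_rank d (w : tensor K d) a : tcoords w (enum_rank a) = w a.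
Proof. by rewrite /tcoords enum_rankK. Qed.

Lemma border_rank_le_tensor_map d e (phi : forall i, 'M[K]_(d i, e i)) k w :
  border_rank_le k w -> border_rank_le k (tensor_map phi w).
Proof.
move=> bw p vanish_p.
pose q : #|{: tidx e}|.-tuple {mpoly K[#|{: tidx d}|]} :=
  [tuple \sum_(a : tidx d) 'X_(enum_rank a) * (\prod_i phi i (a i) (enum_val j i))%:MP
   | j < #|{: tidx e}|].
have eval_pq t : (p \mPo q).@[tcoords t] = p.@[tcoords (tensor_map phi t)].
  rewrite comp_mpoly_meval; apply: meval_eq => j.
  rewrite tnth_mktuple /tcoords ffunE rmorph_sum; apply: eq_bigr => a _.
  by rewrite /= mevalM mevalXU mevalC enum_rankK.
rewrite -eval_pq; apply: bw => t rt.
by rewrite eval_pq; apply/vanish_p/rank_le_tensor_map.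
Qed.

Lemma flat_rank_le_border d k (w : tensor K d) : border_rank_le k w -> flat_rank_le k w.
Proof.
move=> bw i; rewrite leqNgt; apply/negP => /mxrank_gt_minor[f [g /eqP]]; apply.
pose X : 'M[{mpoly K[#|{: tidx d}|]}]_(#|{: tidx d}|, d i) :=
  \matrix_(p, x) 'X_(enum_rank (tidx_upd (enum_val p) i x)).
have eval_minor t : (\det (mxsub f g X)).@[tcoords t] = \det (mxsub f g (flattening t i)).
  rewrite -det_map_mx; congr (\det _); apply/matrixP => r s.
  by rewrite !mxE; apply: (etrans (mevalXU _ _)); rewrite tcoords_enum_rank.
rewrite -eval_minor; apply: bw => t rt.
by rewrite eval_minor; apply/det_mxsub_eq0/flat_rank_le_rank.
Qed.

End FlatteningRank.

Section Compression.
Variables (K : fieldType) (L : eqType) (M d N k : nat) (A : 'M[K]_(M, d)).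
Variables (lab : 'I_d -> L) (lam : 'I_N -> L).
Hypothesis rankA : (\rank A <= k)%N.
Hypothesis enough_slots : forall x, (k <= count (fun b => lam b == lab x) (enum 'I_N))%N.

Definition labels := undup [seq lab x | x <- enum 'I_d].
Definition label_proj l : 'M[K]_d := diag_mx (\row_x (lab x == l)%:R).
Definition slots l := [seq b <- enum 'I_N | lam b == l].
Definition label_base l := row_base (A *m label_proj l).

Definition slot_mx l : 'M[K]_(\rank (A *m label_proj l), N) :=
  \matrix_(t, b) ((b \in slots l) && (index b (slots l) == t))%:R.

Definition compress : 'M[K]_(d, N) :=
  \sum_(l <- labels) label_proj l *m pinvmx (label_base l) *m slot_mx l.
Definition decompress : 'M[K]_(N, d) := \sum_(l <- labels) (slot_mx l)^T *m label_base l.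

Lemma label_proj_idem l : label_proj l *m label_proj l = label_proj l.
Proof.
rewrite mul_diag_mx; apply/matrixP => x y; rewrite !mxE.
by case: (lab x == l); case: (x == y); rewrite ?mul1r ?mul0r ?mulr0 ?mulr1.
Qed.

Lemma sum_label_proj : \sum_(l <- labels) label_proj l = 1%:M.
Proof.
apply/matrixP => x y; rewrite summxE !mxE.
have lab_x : lab x \in labels by rewrite mem_undup; apply: map_f; rewrite mem_enum.
rewrite (bigD1_seq (lab x)) ?undup_uniq //= !mxE eqxx big1_seq ?addr0.
  by case: (x == y).
by move=> l /andP[neq_l _]; rewrite !mxE eq_sym (negbTE neq_l) mul0rn.
Qed.

Lemma label_base_proj l : label_base l *m label_proj l = label_base l.
Proof.
have /submxP[X ->] : (label_base l <= A *m label_proj l)%MS by rewrite eq_row_base.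
by rewrite -!mulmxA label_proj_idem.
Qed.

Lemma slots_uniq l : uniq (slots l).
Proof. by rewrite filter_uniq // enum_uniq. Qed.

Lemma slot_mx_orth l l' : l != l' -> slot_mx l *m (slot_mx l')^T = 0.
Proof.
move=> neq_l; apply/matrixP => t t'; rewrite !mxE; apply: big1 => b _.
rewrite !mxE !mem_filter; case: (lam b =P l) => [eq_l|]; last by rewrite mul0r.
case: (lam b =P l') => [eq_l'|]; last by rewrite mulr0.
by case/negP: neq_l; rewrite -eq_l -eq_l'.
Qed.

Lemma slot_mx_tr l : l \in labels -> slot_mx l *m (slot_mx l)^T = 1%:M.
Proof.
rewrite mem_undup => /mapP[x0 _ ->] {l}; set l := lab x0.
have lt_slots (t : 'I_(\rank (A *m label_proj l))) : (t < size (slots l))%N.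
  rewrite size_filter; apply: leq_trans (enough_slots x0).
  by apply: leq_trans (ltn_ord t) (leq_trans (mxrankM_maxl _ _) rankA).
apply/matrixP => t t'; rewrite !mxE.
have b0 : 'I_N by case: (slots l) (lt_slots t) => // b0.
pose b := nth b0 (slots l) t.
have slot_b : b \in slots l by rewrite mem_nth.
have index_b : index b (slots l) = t by rewrite index_uniq ?slots_uniq.
rewrite (bigD1 b) //= !mxE slot_b index_b eqxx mul1r big1 ?addr0.
  by rewrite -val_eqE.
move=> b' neq_b'; rewrite !mxE; case: (b' \in slots l) / idP => [slot_b'|]; last first.
  by rewrite mul0r.
have [index_b'|] := eqVneq (index b' (slots l)) t; last by rewrite mul0r.
by move: neq_b'; rewrite /b -index_b' nth_index // eqxx.
Qed.

Lemma mul_compress_decompress :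
  compress *m decompress =
  \sum_(l <- labels) label_proj l *m pinvmx (label_base l) *m label_base l.
Proof.
rewrite mulmx_suml; apply: eq_big_seq => l label_l.
rewrite mulmx_sumr (bigD1_seq l) ?undup_uniq //= big1_seq ?addr0.
  by rewrite -!mulmxA (mulmxA (slot_mx l)) slot_mx_tr // mul1mx.
move=> l' /andP[neq_l' _].
by rewrite -!mulmxA (mulmxA (slot_mx l)) slot_mx_orth 1?eq_sym // mul0mx !mulmx0.
Qed.

Lemma compressK : A *m compress *m decompress = A.
Proof.
rewrite -mulmxA mul_compress_decompress -[RHS]mulmx1 -sum_label_proj !mulmx_sumr.
apply: eq_bigr => l _; rewrite (mulmxA A _ (label_base l)) (mulmxA A) mulmxKpV //.
by rewrite /label_base eq_row_base.
Qed.

Lemma compress_label x b : lab x != lam b -> compress x b = 0.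
Proof.
move=> neq_lab; rewrite summxE; apply: big1_seq => l _.
rewrite -mulmxA mul_diag_mx !mxE; have [eq_l|] := eqVneq (lab x) l; last by rewrite mul0r.
rewrite mul1r; apply: big1 => t _; rewrite [X in _ * X]mxE mem_filter.
have /negbTE-> : lam b != l by rewrite -eq_l eq_sym.
by rewrite mulr0.
Qed.

Lemma decompress_label b x : lam b != lab x -> decompress b x = 0.
Proof.
move=> neq_lab; rewrite summxE; apply: big1_seq => l _.
rewrite -label_base_proj mulmxA mul_mx_diag !mxE.
have [eq_l|] := eqVneq (lab x) l; last by rewrite mulr0.
rewrite mulr1; apply: big1 => t _; rewrite [X in X * _]mxE mxE mem_filter.
have /negbTE-> : lam b != l by rewrite -eq_l.
by rewrite mul0r.
Qed.

End Compression.

Section LabelledTensorMaps.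
Variables (K : fieldType) (m : nat) (d : 'I_m -> nat) (N : nat) (L : eqType).
Variables (lab : forall i, 'I_(d i) -> L) (lam : 'I_N -> L).

Definition label_preserving (phi : forall i, 'M[K]_(d i, N))
    (psi : forall i, 'M[K]_(N, d i)) :=
  (forall i x b, lab x != lam b -> phi i x b = 0) /\
  (forall i b x, lam b != lab x -> psi i b x = 0).

Lemma tensor_compression k (w : tensor K d) : flat_rank_le k w ->
    (forall i x, k <= count (fun b => lam b == @lab i x) (enum 'I_N))%N ->
  exists phi psi, label_preserving phi psi /\
    tensor_map psi (tensor_map (e := fun _ => N) phi w) = w.
Proof.
move=> flat_w enough_slots.
exists (fun i => compress (flattening w i) (@lab i) lam).
exists (fun i => decompress (flattening w i) (@lab i) lam).
split; first by split=> i; [apply: compress_label | apply: decompress_label].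
rewrite tensor_map_comp; apply: tensor_map_id_on_flattenings => i.
by rewrite mulmxA (compressK (flat_w i) (enough_slots i)).
Qed.

Section Transport.
Variables (k : nat) (w : tensor K d) (i : 'I_m).
Variables (f : 'I_k.+1 -> 'I_#|{: tidx d}|) (g : 'I_k.+1 -> 'I_(d i)).
Hypothesis enough_slots :
  forall l x, (k.+1 <= count (fun b => lam b == @lab l x) (enum 'I_N))%N.
Variable b0 : 'I_N. (* only a default value for [nth] *)

(* The multi-index of the entry [(r, r)] of the minor: its coordinates together
   cover every coordinate of every entry of the minor. *)
Definition minor_diag r : tidx d := tidx_upd (enum_val (f r)) i (g r).
Definition minor_coords l := undup [seq minor_diag r l | r <- enum 'I_k.+1].
Definition label_coords l c := [seq y <- minor_coords l | @lab l y == c].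
Definition slot_of l (y : 'I_(d l)) :=
  nth b0 (slots lam (lab y)) (index y (label_coords l (lab y))).
Definition transport l : 'M[K]_(d l, N) :=
  \matrix_(y, b) ((y \in minor_coords l) && (b == slot_of y))%:R.

Lemma minor_coordsP r l : minor_diag r l \in minor_coords l.
Proof. by rewrite mem_undup; apply: map_f; rewrite mem_enum. Qed.

Lemma slot_of_index_lt l y : y \in minor_coords l ->
  (index y (label_coords l (lab y)) < size (slots lam (lab y)))%N.
Proof.
move=> coord_y; have label_y : y \in label_coords l (lab y) by rewrite mem_filter eqxx.
apply: leq_trans (_ : _ < size (label_coords l (lab y)))%N _; first by rewrite index_mem.
apply: (@leq_trans (size (minor_coords l))); first by rewrite size_filter count_size.
apply: leq_trans (size_undup _) _; rewrite size_map size_enum_ord.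
by rewrite size_filter; apply: enough_slots.
Qed.

Lemma slot_of_label l y : y \in minor_coords l -> lam (slot_of y) = lab y.
Proof.
by move=> /slot_of_index_lt/(mem_nth b0); rewrite mem_filter => /andP[/eqP].
Qed.

Lemma slot_of_inj l : {in minor_coords l &, injective (@slot_of l)}.
Proof.
move=> x y coord_x coord_y eq_slot.
have eq_lab : lab x = lab y by rewrite -slot_of_label // eq_slot slot_of_label.
have lt_x := slot_of_index_lt coord_x; have lt_y := slot_of_index_lt coord_y.
move: eq_slot lt_x; rewrite /slot_of eq_lab => eq_slot lt_x.
have eq_index : index x (label_coords l (lab y)) = index y (label_coords l (lab y)).
  by apply/eqP; rewrite -(nth_uniq b0 lt_x lt_y (slots_uniq _ _)) eq_slot.
have label_x : x \in label_coords l (lab y) by rewrite mem_filter eq_lab eqxx coord_x.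
have label_y : y \in label_coords l (lab y) by rewrite mem_filter eqxx coord_y.
by rewrite -(nth_index x label_x) eq_index nth_index.
Qed.

Lemma transport_slot l x y :
  y \in minor_coords l -> transport l x (slot_of y) = (x == y)%:R.
Proof.
move=> coord_y; rewrite mxE; have [->|neq_xy] := eqVneq x y; first by rewrite coord_y eqxx.
case coord_x: (x \in minor_coords l) => //=; case: eqP => // eq_slot.
by case/eqP: neq_xy; apply: slot_of_inj; rewrite ?eq_slot.
Qed.

Lemma transport_label l x b : lab x != lam b -> transport l x b = 0.
Proof.
move=> neq_lab; rewrite mxE; case coord_x: (x \in minor_coords l) => //=.
by case: eqP => // eq_b; move: neq_lab; rewrite eq_b slot_of_label ?eqxx.
Qed.

Lemma transport_minor :
  mxsub (fun r => enum_rank [ffun l => slot_of (minor_diag r l)]) (fun s => slot_of (g s))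
    (flattening (tensor_map (e := fun _ => N) transport w) i) = mxsub f g (flattening w i).
Proof.
apply/matrixP => r s; rewrite !mxE enum_rankK; apply: tensor_map_delta => l x.
have [eq_li|neq_li] := eqVneq l i.
  subst l; rewrite !tidx_upd_at transport_slot //.
  by rewrite -(tidx_upd_at (enum_val (f s)) (g s)) minor_coordsP.
rewrite !tidx_upd_out // ffunE transport_slot ?minor_coordsP //.
by rewrite /minor_diag tidx_upd_out.
Qed.

End Transport.

Lemma transport_rank k (w : tensor K d) i
    (f : 'I_k.+1 -> 'I_#|{: tidx d}|) (g : 'I_k.+1 -> 'I_(d i)) :
    (forall l x, k.+1 <= count (fun b => lam b == @lab l x) (enum 'I_N))%N ->
    \det (mxsub f g (flattening w i)) != 0 ->
  exists phi : forall l, 'M[K]_(d l, N), (forall l x b, lab x != lam b -> phi l x b = 0) /\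
    (k < \rank (flattening (tensor_map (e := fun _ => N) phi w) i))%N.
Proof.
move=> enough_slots minor_neq0.
have : has (fun b => lam b == lab (g ord0)) (enum 'I_N).
  by rewrite has_count; apply: leq_trans (enough_slots i (g ord0)).
case/hasP => b0 _ _; exists (transport f g b0); split; first exact: transport_label.
rewrite ltnNge; apply: contra minor_neq0 => /det_mxsub_eq0 minor_eq0.
by rewrite -(transport_minor w f g enough_slots b0) minor_eq0.
Qed.

End LabelledTensorMaps.

Lemma row_unitmx_neq0 (K : fieldType) n (P : 'M[K]_n) x : P \in unitmx -> row x P != 0.
Proof.
move=> unitP; apply/eqP => /(congr1 (mulmx^~ (invmx P))).
rewrite -row_mul mulmxV // mul0mx row1 => /rowP/(_ x)/eqP.
by rewrite !mxE !eqxx oner_eq0.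
Qed.

Lemma scalerIv (K : fieldType) n (u : 'rV[K]_n) a b : u != 0 -> a *: u = b *: u -> a = b.
Proof.
move=> u_neq0 eq_au; apply/eqP; rewrite -subr_eq0.
have : (a - b) *: u == 0 by rewrite scalerBl eq_au subrr.
by rewrite scaler_eq0 (negbTE u_neq0) orbF.
Qed.

Lemma mxrank_le_count_support (K : fieldType) n N (C : 'M[K]_(n, N)) (sel : pred 'I_N) :
  (forall s b, ~~ sel b -> C s b = 0) -> (\rank C <= count sel (enum 'I_N))%N.
Proof.
move=> C_supp; pose T := in_tuple [seq b <- enum 'I_N | sel b].
have uniqT : uniq T by rewrite filter_uniq // enum_uniq.
suff -> : C = colsub (tnth T) C *m rowsub (tnth T) 1%:M.
  by rewrite -size_filter; apply: leq_trans (mxrankM_maxl _ _) (rank_leq_col _).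
apply/matrixP => s b; rewrite mxE; under eq_bigr => t _ do rewrite !mxE.
have [Tb|notTb] := boolP (b \in T); last first.
  rewrite C_supp; last by move: notTb; rewrite mem_filter mem_enum andbT.
  apply/esym/big1 => t _; case: eqP => [eq_tb|]; last by rewrite mulr0.
  by case/negP: notTb; rewrite -eq_tb mem_tnth.
have lt_b : (index b T < size T)%N by rewrite index_mem.
have tnth_b : tnth T (Ordinal lt_b) = b by rewrite (tnth_nth b) nth_index.
rewrite (bigD1 (Ordinal lt_b)) //= tnth_b eqxx mulr1 big1 ?addr0 // => t neq_t.
case: eqP => [eq_tb|]; last by rewrite mulr0.
by case/eqP: neq_t; apply: val_inj; rewrite /= -eq_tb (tnth_nth b) index_uniq.
Qed.

Section LinearCharacters.
Variables (K : fieldType) (gT : finGroupType) (G : {group gT}).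

(* Characters are compared on [G] only: their values off [G] are arbitrary. *)
Definition char_label (c : gT -> K) : {ffun gT -> K} :=
  [ffun g => if g \in G then c g else 0].

Lemma char_labelP c1 c2 g : g \in G -> char_label c1 = char_label c2 -> c1 g = c2 g.
Proof. by move=> Gg /ffunP/(_ g); rewrite !ffunE Gg. Qed.

Definition is_eigenbasis n (rG : mx_representation K G n) (P : 'M[K]_n)
    (chi : 'I_n -> gT -> K) :=
  P \in unitmx /\ forall x g, g \in G -> row x P *m rG g = chi x g *: row x P.

Lemma eigenbasis_exists n (rG : mx_representation K G n) :
  reps_split_into_lines K G -> exists P chi, is_eigenbasis rG P chi.
Proof.
move=> /(_ n rG)[I [U [U_lines [sum_U1 dir_U]]]].
have rankU i : \rank (U i) = 1%N by case: (U_lines i).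
have cardI : #|I| = n.
  rewrite -(mxrank1 K n) -(eqmx_rank sum_U1); move: dir_U; rewrite mxdirectE /= => /eqP->.
  by rewrite (eq_bigr (fun _ => 1%N)) ?sum1_card.
pose e (x : 'I_n) : I := enum_val (cast_ord (esym cardI) x).
pose u i := nz_row (U i); pose P : 'M[K]_n := \matrix_(x, y) u (e x) 0 y.
have rowP x : row x P = u (e x) by apply/rowP => y; rewrite !mxE.
have U_u i : (U i <= u i)%MS.
  have u_neq0 : u i != 0 by rewrite nz_row_eq0 -mxrank_eq0 rankU.
  have rank_u : \rank (u i) = 1%N.
    by apply/eqP; rewrite eqn_leq rank_leq_row lt0n mxrank_eq0.
  have := (mxrank_leqif_eq (nz_row_sub (U i))).2.
  by rewrite -/(u i) rank_u rankU eqxx => /esym/andP[].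
exists P, (fun x g => (u (e x) *m rG g *m pinvmx (u (e x))) 0 0); split.
  case/andP: sum_U1 => _ sum_U; rewrite -row_full_unit -sub1mx.
  apply: submx_trans sum_U _.
  apply/sumsmx_subP => i _; apply: submx_trans (U_u i) _.
  have -> : u i = row (cast_ord cardI (enum_rank i)) P.
    by rewrite rowP /e cast_ordK enum_rankK.
  exact: row_sub.
move=> x g Gg; rewrite rowP.
have /mulmxKpV{1}<- : (u (e x) *m rG g <= u (e x))%MS.
  apply: submx_trans (submxMr _ (nz_row_sub _)) _; apply: submx_trans (U_u (e x)).
  by have /mxsimple_module/mxmoduleP-> := (U_lines (e x)).1.
by rewrite {1}[_ *m pinvmx _]mx11_scalar mul_scalar_mx.
Qed.

Lemma eigenbasis_diag n (rG : mx_representation K G n) (P : 'M[K]_n)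
    (chi : 'I_n -> gT -> K) g :
  (forall x, row x P *m rG g = chi x g *: row x P) ->
  P *m rG g = diag_mx (\row_x chi x g) *m P.
Proof.
move=> eigP; apply/row_matrixP => x; rewrite row_mul eigP mul_diag_mx.
by apply/rowP => y; rewrite !mxE.
Qed.

Lemma Glinear_conj (rV rW : representation K G) (P : 'M[K]_(rdegree rV)) chiV
    (Q : 'M[K]_(rdegree rW)) chiW (M : 'M[K]_(rdegree rV, rdegree rW)) :
    is_eigenbasis rV P chiV -> is_eigenbasis rW Q chiW ->
    (forall x b, char_label (chiV x) != char_label (chiW b) -> M x b = 0) ->
  Glinear (invmx P *m M *m Q).
Proof.
move=> [unitP eigP] [unitQ eigQ] M_label g Gg.
have rV_g : rV g = invmx P *m diag_mx (\row_x chiV x g) *m P.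
  by rewrite -mulmxA -(eigenbasis_diag (fun x => eigP x g Gg)) mulmxA mulVmx // mul1mx.
have diag_M : diag_mx (\row_x chiV x g) *m M = M *m diag_mx (\row_b chiW b g).
  rewrite mul_diag_mx mul_mx_diag; apply/matrixP => x b; rewrite !mxE.
  have [/(char_labelP Gg)->|/M_label->] :=
    eqVneq (char_label (chiV x)) (char_label (chiW b)).
    by rewrite mulrC.
  by rewrite mulr0 mul0r.
rewrite rV_g -(mulmxA _ Q) (eigenbasis_diag (fun b => eigQ b g Gg)) !mulmxA.
by rewrite -(mulmxA _ P) mulmxV // mulmx1 -(mulmxA (invmx P) _ M) diag_M !mulmxA.
Qed.

Lemma eigenvalue_morph n (rG : mx_representation K G n) (u : 'rV[K]_n) (c : gT -> K) :
    u != 0 -> (forall g, g \in G -> u *m rG g = c g *: u) ->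
  {in G &, {morph c : g h / (g * h)%g >-> g * h}} /\ c 1%g = 1.
Proof.
move=> u_neq0 eig_u; split.
  move=> g h Gg Gh; apply: (scalerIv u_neq0).
  by rewrite -eig_u ?groupM // repr_mxM // mulmxA eig_u // -scalemxAl eig_u // scalerA.
by apply: (scalerIv u_neq0); rewrite -eig_u // repr_mx1 mulmx1 scale1r.
Qed.

(* A linear character [c] occurs in K[G] with eigenvector [g |-> c (g^-1)]. *)
Lemma regular_eigenvector (c : gT -> K) :
    {in G &, {morph c : g h / (g * h)%g >-> g * h}} -> c 1%g = 1 ->
  exists2 v : 'rV[K]_(rdegree (regRep K G)), v != 0 &
    forall g, g \in G -> v *m regRep K G g = c g *: v.
Proof.
move=> c_morph c1; exists (\row_j c (enum_val j)^-1%g).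
  apply/eqP => /rowP/(_ (gring_index G 1)); rewrite !mxE gring_indexK // invg1 c1.
  by move/eqP; rewrite oner_eq0.
move=> x Gx; apply/rowP => j; rewrite !mxE.
have Gj : enum_val j \in G by apply: enum_valP.
pose i0 := gring_index G (enum_val j * x^-1)%g.
have i0E : enum_val i0 = (enum_val j * x^-1)%g by rewrite gring_indexK // groupM ?groupV.
rewrite (bigD1 i0) //= !mxE i0E -mulgA mulVg mulg1 gring_valK !eqxx mulr1.
rewrite big1 ?addr0; first by rewrite invMg invgK c_morph ?groupV.
move=> i neq_i; rewrite !mxE.
case: (j =P gring_index G (enum_val i * x)%g) => [eq_j|]; last by rewrite mulr0.
case/eqP: neq_i; apply: (can_inj gring_valK); rewrite gring_indexK ?groupM ?groupV //.
by rewrite eq_j gring_indexK ?groupM ?enum_valP // -mulgA mulgV mulg1.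
Qed.

Lemma regRepPow_eigenspace (c : gT -> K) :
    {in G &, {morph c : g h / (g * h)%g >-> g * h}} -> c 1%g = 1 ->
  forall n, exists2 X : 'M[K]_(n, rdegree (regRepPow K G n)), row_free X &
    forall g, g \in G -> X *m regRepPow K G n g = c g *: X.
Proof.
move=> c_morph c1; have [v v_neq0 eig_v] := regular_eigenvector c_morph c1.
elim=> [|n [X freeX eig_X]].
  by exists 0; [rewrite /row_free mxrank0 | move=> g _; apply/matrixP => [[]]].
rewrite /regRepPow /muln_grepr big_ord_recl.
exists (block_mx v 0 0 X : 'M_(1 + n, _)).
  by rewrite /row_free (rank_diag_block_mx v X) rank_rV v_neq0 (eqP freeX).
move=> g Gg; apply: (etrans (mulmx_block v 0 0 X _ _ _ _)).
rewrite !(mulmx0, mul0mx, addr0, add0r) eig_v // eig_X //.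
by rewrite (scale_block_mx (c g) v 0 0 X) !scaler0.
Qed.

Lemma count_eigenbasis_labels N (rW : mx_representation K G N) (Q : 'M[K]_N) lam
    (c : gT -> K) n (X : 'M[K]_(n, N)) :
    is_eigenbasis rW Q lam -> row_free X ->
    (forall g, g \in G -> X *m rW g = c g *: X) ->
  (n <= count (fun b => char_label (lam b) == char_label c) (enum 'I_N))%N.
Proof.
move=> [unitQ eigQ] freeX eig_X.
have [C defC] : {C : 'M[K]_(n, N) | C = X *m invmx Q} by exists (X *m invmx Q).
have <- : \rank C = n by rewrite defC mxrankMfree ?(eqP freeX) // row_free_unit unitmx_inv.
apply: mxrank_le_count_support => s b lab_b.
(* Coordinates of [c]-eigenvectors vanish off the basis vectors of character [c]. *)
have [g /andP[Gg neq_g]] : exists g, (g \in G) && (lam b g != c g).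
  apply/existsP; apply: contraR lab_b => /existsPn eq_lam; apply/eqP/ffunP => g.
  rewrite !ffunE; case Gg: (g \in G) => //.
  by move: (eq_lam g); rewrite Gg negbK => /eqP.
have : C *m diag_mx (\row_b lam b g) = c g *: C.
  apply: (can_inj (mulmxK unitQ)).
  rewrite -mulmxA -(eigenbasis_diag (fun b => eigQ b g Gg)) mulmxA defC mulmxKV //.
  by rewrite eig_X // -scalemxAl mulmxKV.
move/matrixP/(_ s b); rewrite mul_mx_diag !mxE => eq_Csb.
have : C s b * (lam b g - c g) == 0 by rewrite mulrBr eq_Csb mulrC subrr.
by rewrite mulf_eq0 subr_eq0 (negbTE neq_g) orbF => /eqP.
Qed.

End LinearCharacters.

Section EigenCoordinates.
Variables (K : fieldType) (gT : finGroupType) (G : {group gT}).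
Hypothesis Ksplit : reps_split_into_lines K G.
Variables (m k : nat) (V : 'I_m -> representation K G).
Variables (P : forall i, 'M[K]_(rdegree (V i)))
  (chi : forall i, 'I_(rdegree (V i)) -> gT -> K).
Arguments chi : clear implicits.
Hypothesis eigP : forall i, is_eigenbasis (V i) (P i) (chi i).
Variable w : tensor K (fun i => rdegree (V i)).

Definition eigen_coords := tensor_map (fun i => invmx (P i)) w.

Let label i x := char_label G (chi i x).

Lemma eigen_coordsK : tensor_map P eigen_coords = w.
Proof.
rewrite tensor_map_comp -[RHS]tensor_map1; apply: eq_tensor_map => i.
by rewrite mulVmx //; case: (eigP i).
Qed.

Lemma regRepPow_eigenbasis n : exists Q lam, is_eigenbasis (regRepPow K G n) Q lam /\
  forall i (x : 'I_(rdegree (V i))),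
    (n <= count (fun b => char_label G (lam b) == label x)
                (enum 'I_(rdegree (regRepPow K G n))))%N.
Proof.
have [Q [lam eigQ]] := eigenbasis_exists (regRepPow K G n) Ksplit.
exists Q, lam; split=> // i x; have [unitP eigPi] := eigP i.
have [chi_morph chi1] := eigenvalue_morph (row_unitmx_neq0 x unitP) (eigPi x).
have [X freeX eig_X] := regRepPow_eigenspace chi_morph chi1 n.
exact: count_eigenbasis_labels eigQ freeX eig_X.
Qed.

Lemma Glinear_compression n : flat_rank_le k eigen_coords -> (k <= n)%N ->
  exists (phi : forall i, 'M[K]_(rdegree (V i), rdegree (regRepPow K G n)))
         (psi : forall i, 'M[K]_(rdegree (regRepPow K G n), rdegree (V i))),
    (forall i, Glinear (phi i) /\ Glinear (psi i)) /\
    tensor_map psi (tensor_map (e := fun _ => rdegree (regRepPow K G n)) phi w) = w.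
Proof.
move=> flat_w le_kn; have [Q [lam [eigQ enough_slots]]] := regRepPow_eigenbasis n.
have [phi [psi [[phi_label psi_label] phiK]]] :=
  tensor_compression (lam := fun b => char_label G (lam b)) flat_w
    (fun i x => leq_trans le_kn (enough_slots i x)).
exists (fun i => invmx (P i) *m phi i *m Q), (fun i => invmx Q *m psi i *m P i); split.
  move=> i; split; first exact: Glinear_conj (eigP i) eigQ (phi_label i).
  exact: Glinear_conj eigQ (eigP i) (psi_label i).
rewrite -[RHS]eigen_coordsK -phiK /eigen_coords !tensor_map_comp.
by apply: eq_tensor_map => i; rewrite !mulmxA (mulmxK eigQ.1).
Qed.

Lemma flat_rank_eigen_coords n : (k < n)%N ->
    (forall phi : forall i, 'M[K]_(rdegree (V i), rdegree (regRepPow K G n)),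
       (forall i, Glinear (phi i)) ->
       border_rank_le k (tensor_map (e := fun _ => rdegree (regRepPow K G n)) phi w)) ->
  flat_rank_le k eigen_coords.
Proof.
move=> lt_kn border_images i; rewrite leqNgt.
apply/negP => /mxrank_gt_minor[f [g minor_neq0]].
have [Q [lam [eigQ enough_slots]]] := regRepPow_eigenbasis n.
have [phi [phi_label]] := transport_rank (lam := fun b => char_label G (lam b))
  (fun l x => leq_trans lt_kn (enough_slots l x)) minor_neq0.
apply/negP; rewrite -leqNgt.
pose phiG l := invmx (P l) *m phi l *m Q.
have -> : tensor_map phi eigen_coords = tensor_map (fun l => invmx Q) (tensor_map phiG w).
  rewrite /eigen_coords !tensor_map_comp; apply: eq_tensor_map => l.
  by rewrite /phiG -!mulmxA mulmxV ?mulmx1 //; case: eigQ.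
apply/flat_rank_le_border/border_rank_le_tensor_map/border_images => l.
exact: Glinear_conj (eigP l) eigQ (phi_label l).
Qed.

End EigenCoordinates.

Theorem lemma3p1 (K : fieldType) (gT : finGroupType) (G : {group gT})
    (abG : abelian G) (Kinf : infinite_field K)
    (Ksplit : reps_split_into_lines K G)
    (m k n : nat) (hn : (k + 1 <= n)%N)
    (V : 'I_m -> representation K G)
    (w : tensor K (fun i => rdegree (V i))) :
  (rank_le k w <->
     forall phi : forall i : 'I_m, 'M[K]_(rdegree (V i), rdegree (regRepPow K G n)),
       (forall i, Glinear (phi i)) ->
       rank_le k (tensor_map (e := fun _ => rdegree (regRepPow K G n)) phi w)) /\
  (border_rank_le k w <->
     forall phi : forall i : 'I_m, 'M[K]_(rdegree (V i), rdegree (regRepPow K G n)),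
       (forall i, Glinear (phi i)) ->
       border_rank_le k (tensor_map (e := fun _ => rdegree (regRepPow K G n)) phi w)) /\
  (border_rank_le k w ->
     exists (phi : forall i : 'I_m, 'M[K]_(rdegree (V i), rdegree (regRepPow K G k)))
            (psi : forall i : 'I_m, 'M[K]_(rdegree (regRepPow K G k), rdegree (V i))),
       (forall i, Glinear (phi i) /\ Glinear (psi i)) /\
       tensor_map psi (tensor_map (e := fun _ => rdegree (regRepPow K G k)) phi w) = w).
Proof.
have [P /fin_all_exists[chi eigP]] :=
  fin_all_exists (fun i => eigenbasis_exists (V i) Ksplit).
have lt_kn : (k < n)%N by rewrite -addn1.
have flat_of_images := flat_rank_eigen_coords Ksplit eigP (w := w) lt_kn.
have compress := Glinear_compression Ksplit eigP (k := k) (w := w).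
split; [split | split; [split |]].
- by move=> rank_w phi _; apply: rank_le_tensor_map.
- move=> rank_images.
  have flat_w := flat_of_images (fun phi Gphi => rank_le_border (rank_images phi Gphi)).
  have [phi [psi [Gphi <-]]] := compress n flat_w (ltnW lt_kn).
  by apply/rank_le_tensor_map/rank_images => i; case: (Gphi i).
- by move=> border_w phi _; apply: border_rank_le_tensor_map.
- move=> border_images.
  have [phi [psi [Gphi <-]]] := compress n (flat_of_images border_images) (ltnW lt_kn).
  by apply/border_rank_le_tensor_map/border_images => i; case: (Gphi i).
- move=> border_w; apply: compress (leqnn k).
  exact/flat_rank_le_border/border_rank_le_tensor_map.
Qed.
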